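(* Let $\varepsilon>0$ be a constant, $m=m(n)=n^{1+\varepsilon}$ and $\mu=\mu(n)=n^{-\varepsilon}$. Suppose that for every $n$ there is a matrix $A_n\in\mathbb{F}_2^{m\times n}$ such that there is no family of polynomial-size non-uniform nondeterministic circuits $C:\{0,1\}^m\to\{0,1\}$ that accepts a constant fraction of uniformly random strings in $\{0,1\}^m$ but rejects every string of the form $A_n\vec{s}+\vec{e}$ with $\vec{s}\in\mathbb{F}_2^n$ and $\vec{e}\in\mathbb{F}_2^m$ of Hamming weight at most $\mu m$. Then there exist constants $\varepsilon'>0$, $d\ge2$ and a (non-uniformly computable) family of demi-bits generators $\{g_n:\{0,1\}^n\to\{0,1\}^{n^{1+\varepsilon'}}\}$ secure against $\mathbf{NP}/\mathrm{poly}$ such that each output bit of $g_n$ is computable by a polynomial of degree $d$ over $\mathbb{F}_2$.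
   Context: A family $\{g_n:\{0,1\}^n\to\{0,1\}^{N(n)}\}$ with $N(n)>n$, computable by polynomial-size circuits, is a demi-bits generator secure against $\mathbf{NP}/\mathrm{poly}$ if there is no family of polynomial-size nondeterministic circuits $D$ that accepts a constant fraction of $y\in\{0,1\}^{N}$ while rejecting every $y\in\mathrm{Range}(g_n)$ (for all sufficiently large $n$). *)

From Stdlib Require Import Reals.
From mathcomp Require Import all_boot all_order all_algebra.
Set Implicit Arguments. Unset Strict Implicit. Unset Printing Implicit Defensive.
Import GRing.Theory.

(** Wires 0..k-1 are the inputs; gate number j produces wire k+j and may only
    read earlier wires (a reference to a non-existing wire reads [false]). *)
Inductive gate : Type :=
| GAnd : nat -> nat -> gate
| GOr  : nat -> nat -> gate
| GNot : nat -> gate.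

Record circuit : Type := Circuit { gates : seq gate; outs : seq nat }.

Definition eval_gate (ws : seq bool) (g : gate) : bool :=
  match g with
  | GAnd i j => nth false ws i && nth false ws j
  | GOr i j => nth false ws i || nth false ws j
  | GNot i => ~~ nth false ws i
  end.

Definition eval_wires (C : circuit) (inp : seq bool) : seq bool :=
  foldl (fun ws g => rcons ws (eval_gate ws g)) inp (gates C).

Definition eval_out (C : circuit) (inp : seq bool) : seq bool :=
  [seq nth false (eval_wires C inp) i | i <- outs C].

Definition csize (C : circuit) : nat := size (gates C).

Record ndcircuit : Type := NDCircuit { ndc : circuit; wlen : nat }.

Definition nd_accepts (D : ndcircuit) (x : seq bool) : bool :=
  [exists y : (wlen D).-tuple bool, eval_out (ndc D) (x ++ y) == [:: true]].

Definition nd_size (D : ndcircuit) : nat := csize (ndc D) + wlen D.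

Definition nd_breaks (N : nat -> nat) (Bad : forall n, (N n).-tuple bool -> Prop)
  : Prop :=
  exists (c : nat) (delta : R) (D : nat -> ndcircuit),
    Rlt R0 delta /\
    exists n0 : nat, forall n : nat, (n0 <= n)%N ->
      (nd_size (D n) <= c * n ^ c + c)%N /\
      Rle (Rmult delta (pow (INR 2) (N n))) (INR #|[set y : (N n).-tuple bool | nd_accepts (D n) y]|) /\
      (forall y : (N n).-tuple bool, Bad n y -> ~~ nd_accepts (D n) y).

Definition poly_circuit_computable (N : nat -> nat)
  (g : forall n, n.-tuple bool -> (N n).-tuple bool) : Prop :=
  exists (c : nat) (C : nat -> circuit), forall n : nat,
    (csize (C n) <= c * n ^ c + c)%N /\
    forall x : n.-tuple bool, eval_out (C n) x = val (g n x).

Definition demibits_generator_NPpoly (N : nat -> nat)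
  (g : forall n, n.-tuple bool -> (N n).-tuple bool) : Prop :=
  (exists n0 : nat, forall n : nat, (n0 <= n)%N -> (n < N n)%N) /\
  poly_circuit_computable g /\
  ~ nd_breaks (fun n y => exists x : n.-tuple bool, y = g n x).

(** * Degree-d F_2 polynomials on bits.  Over F_2 and 0/1 inputs every
    polynomial of degree <= d equals a multilinear one of degree <= d, i.e. a
    XOR of monomials (ANDs of at most d variables). *)
Definition f2poly_deg_le (n d : nat) (f : n.-tuple bool -> bool) : Prop :=
  exists P : {set {set 'I_n}},
    (forall S, S \in P -> (#|S| <= d)%N) /\
    forall x : n.-tuple bool,
      f x = odd #|[set S in P | [forall i in S, tnth x i]]|.

Definition rpow_len (a : R) (n : nat) : nat :=
  Z.to_nat (Int_part (Rpower (INR n) a)).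

Definition bits_of_cV (k : nat) (v : 'cV['F_2]_k) : k.-tuple bool :=
  [tuple v i ord0 != 0%R | i < k].

Definition hweight (k : nat) (v : 'cV['F_2]_k) : nat := #|[set i | v i ord0 != 0%R]|.

Definition lpn_strings (eps : R) (A : forall n, 'M['F_2]_(rpow_len (Rplus R1 eps) n, n))
  (n : nat) (y : (rpow_len (Rplus R1 eps) n).-tuple bool) : Prop :=
  exists (s : 'cV['F_2]_n) (e : 'cV['F_2]_(rpow_len (Rplus R1 eps) n)),
    Rle (INR (hweight e)) (Rmult (Rpower (INR n) (Ropp eps)) (INR (rpow_len (Rplus R1 eps) n))) /\
    y = bits_of_cV (A n *m s + e).

From Stdlib Require Import Reals Lra Lia.
From mathcomp Require Import all_boot all_order all_algebra zify.

Set Implicit Arguments. Unset Strict Implicit. Unset Printing Implicit Defensive.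

(* The generator outputs a suffix of [A s + e] computed from a short seed.
   The at most [k] error positions (in [0, m), [m = k ^ (1 + eps)], noise
   rate [k ^ -eps]) are written in base [L], with [L ^ d >= m], and each one
   is fed to the generator as [d] one-hot vectors of length [L]: the [d]-fold tensor product of these vectors is the
   indicator of the error position, so every output bit is a polynomial of
   degree [d] in the seed.  The seed has [n = k (1 + d L)] bits; choosing
   [d = B (q + 1)] with [m <= k ^ B] makes [L <= k ^ (1/(q+1))], so that
   [n ^ (1 + 1/q) <= k ^ (1 + eps) = m]: the generator stretches [n] bits to
   [n ^ (1 + 1/q)] bits, and every LPN sample has its last [n ^ (1 + 1/q)]
   bits in the range of the generator.  A nondeterministic circuit breaking
   the generator, run on that suffix, therefore breaks LPN.  On lengths not
   of the form [n = k (1 + d L)] the generator is constant, which is harmless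
   since a breaker has to succeed on all large lengths. *)

(** * Floors of real powers *)

Section RealPowerLengths.
Local Open Scope R_scope.

Lemma INR_rpow_len_le a n : INR (rpow_len a n) <= Rpower (INR n) a.
Proof.
have [lo hi] := base_Int_part (Rpower (INR n) a).
have pos := exp_pos (a * ln (INR n)).
have : Z.le 0 (Int_part (Rpower (INR n) a)).
  suff : IZR (-1) < IZR (Int_part (Rpower (INR n) a)) by move/lt_IZR; lia.
  rewrite /Rpower in lo hi *; lra.
by move=> z_ge0; rewrite /rpow_len INR_IZR_INZ Znat.Z2Nat.id // -INR_IZR_INZ.
Qed.

Lemma rpow_len_ge (t n : nat) a : INR t <= Rpower (INR n) a -> (t <= rpow_len a n)%N.
Proof.
move=> le_t; have [_ hi] := base_Int_part (Rpower (INR n) a).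
have : IZR (Z.of_nat t) - 1 < IZR (Int_part (Rpower (INR n) a)) by rewrite -INR_IZR_INZ; lra.
by rewrite -minus_IZR => /lt_IZR lt_t; apply/leP; rewrite /rpow_len; lia.
Qed.

Lemma rpow_len_le (t n : nat) a : Rpower (INR n) a <= INR t -> (rpow_len a n <= t)%N.
Proof.
by move=> le_t; apply/leP/INR_le; apply: Rle_trans (INR_rpow_len_le a n) le_t.
Qed.

Lemma leq_rpow_len a b m n :
  Rpower (INR m) a <= Rpower (INR n) b -> (rpow_len a m <= rpow_len b n)%N.
Proof. by move=> le_mn; apply: rpow_len_ge; apply: Rle_trans (INR_rpow_len_le a m) le_mn. Qed.

Lemma INR_gt0 (n : nat) : (0 < n)%N -> 0 < INR n.
Proof. by move=> /ltP; apply: lt_0_INR. Qed.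

Lemma INR_ge1 (n : nat) : (0 < n)%N -> 1 <= INR n.
Proof. by move=> /leP /le_INR le1n; exact: le1n. Qed.

Lemma INR_expn (m e : nat) : INR (m ^ e) = INR m ^ e.
Proof. by elim: e => // e IH; rewrite expnS mult_INR IH. Qed.

Lemma Rpower_INR_expn (m e : nat) : (0 < m)%N -> Rpower (INR m) (INR e) = INR (m ^ e).
Proof. by move=> m_gt0; rewrite Rpower_pow ?INR_expn //; apply: INR_gt0. Qed.

Lemma rpow_len_leq_expn a (B n : nat) :
  (0 < n)%N -> a <= INR B -> (rpow_len a n <= n ^ B)%N.
Proof.
move=> n_gt0 le_aB; apply: rpow_len_le; rewrite -Rpower_INR_expn //.
exact: Rle_Rpower (INR_ge1 n_gt0) le_aB.
Qed.

Lemma rpow_len_monotone a (m n : nat) :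
  0 <= a -> (0 < m <= n)%N -> (rpow_len a m <= rpow_len a n)%N.
Proof.
move=> a_ge0 /andP[m_gt0 /leP le_mn]; apply: leq_rpow_len.
by apply: Rle_Rpower_l => //; split; [apply: INR_gt0 | apply: le_INR].
Qed.

(* Stdlib's [ln] is [0] at [0], hence [Rpower 0 a = 1]. *)
Lemma rpow_len0 a : rpow_len a 0 = 1%N.
Proof.
rewrite /rpow_len /Rpower /ln; case: Rlt_dec => [/Rlt_irrefl // | _].
by rewrite Rmult_0_r exp_0 (_ : 1 = INR 1) // Int_part_INR.
Qed.

Lemma rpow_len_leq_sqS (q n : nat) : (0 < q)%N -> (rpow_len (1 + / INR q) n <= n ^ 2 + 1)%N.
Proof.
move=> q_gt0; case: n => [|n]; first by rewrite rpow_len0.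
apply: leq_trans (leq_addr _ _); apply: rpow_len_leq_expn => //.
have : / INR q <= 1 by rewrite -Rinv_1; apply/Rinv_le_contravar/INR_ge1 => //; lra.
by rewrite /=; lra.
Qed.

Lemma Rpower_le_of_expn (m n e1 e2 q : nat) : (0 < m)%N -> (0 < n)%N -> (0 < q)%N ->
  (m ^ e1 <= n ^ e2)%N -> Rpower (INR m) (INR e1 / INR q) <= Rpower (INR n) (INR e2 / INR q).
Proof.
move=> m_gt0 n_gt0 q_gt0 /leP /le_INR le_mn.
rewrite /Rdiv -!Rpower_mult !Rpower_INR_expn //.
apply: Rle_Rpower_l; first exact/Rlt_le/Rinv_0_lt_compat/INR_gt0.
by split; rewrite // INR_expn; apply/pow_lt/INR_gt0.
Qed.

Lemma ltn_rpow_len (q n : nat) : (0 < q)%N -> (2 ^ q <= n)%N ->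
  (n < rpow_len (1 + / INR q) n)%N.
Proof.
move=> q_gt0 le_n.
have n_gt0 : (0 < n)%N by apply: leq_trans le_n; rewrite expn_gt0.
have le_pow : (n.+1 ^ q <= n ^ q.+1)%N.
  apply: (@leq_trans ((n + n) ^ q)); first by rewrite leq_exp2r // -addn1 leq_add2l.
  by rewrite addnn -mul2n expnMn expnS leq_mul2r le_n orbT.
have := Rpower_le_of_expn (ltn0Sn n) n_gt0 q_gt0 le_pow.
have q_pos := INR_gt0 q_gt0.
rewrite /Rdiv Rinv_r; last lra.
have -> : INR q.+1 * / INR q = 1 + / INR q by rewrite S_INR; field; lra.
by rewrite Rpower_1; [apply: rpow_len_ge | apply: INR_gt0].
Qed.

(* [n ^ (1 + 1/q) <= k ^ (1 + 4/q) <= k ^ (1 + eps)] *)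
Lemma leq_rpow_len_of_expn eps (q n k : nat) : (0 < n)%N -> (0 < k)%N ->
  4 <= INR q * eps -> (n ^ q.+1 <= k ^ (q + 4))%N ->
  (rpow_len (1 + / INR q) n <= rpow_len (1 + eps) k)%N.
Proof.
move=> n_gt0 k_gt0 le_4 le_nk.
have q_gt0 : (0 < q)%N by case: q le_4 le_nk => //=; lra.
have q_pos := INR_gt0 q_gt0.
apply: leq_rpow_len.
have -> : 1 + / INR q = INR q.+1 / INR q by rewrite S_INR; field; lra.
apply: Rle_trans (Rpower_le_of_expn n_gt0 k_gt0 q_gt0 le_nk) _.
apply: Rle_Rpower; first exact: INR_ge1.
have -> : INR (q + 4) / INR q = 1 + 4 / INR q by rewrite plus_INR; simpl; field; lra.
suff : 4 / INR q <= eps by lra.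
apply: (Rmult_le_reg_l (INR q)) => //.
by rewrite (_ : INR q * (4 / INR q) = 4); [lra | field; lra].
Qed.

Lemma leq_Rpower_opp_mul_rpow_len eps (w k : nat) : (0 < k)%N ->
  INR w <= Rpower (INR k) (- eps) * INR (rpow_len (1 + eps) k) -> (w <= k)%N.
Proof.
move=> k_gt0 le_w; apply/leP/INR_le; apply: Rle_trans le_w _.
have k_pos := INR_gt0 k_gt0.
apply: Rle_trans (Rmult_le_compat_l _ _ _ (Rlt_le _ _ (exp_pos _)) (INR_rpow_len_le _ _)) _.
by rewrite -Rpower_plus (_ : - eps + (1 + eps) = 1); [rewrite Rpower_1; lra | ring].
Qed.

End RealPowerLengths.

(** * Straight-line circuits *)

Definition step (ws : seq bool) (g : gate) : seq bool := rcons ws (eval_gate ws g).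

Definition exec (ws : seq bool) (gs : seq gate) : seq bool := foldl step ws gs.
Arguments exec : simpl never.

Lemma eval_wiresE C inp : eval_wires C inp = exec inp (gates C).
Proof. by []. Qed.

Lemma exec_cat ws gs1 gs2 : exec ws (gs1 ++ gs2) = exec (exec ws gs1) gs2.
Proof. exact: foldl_cat. Qed.

Lemma exec_cons ws g gs : exec ws (g :: gs) = exec (step ws g) gs.
Proof. by []. Qed.

Lemma size_exec ws gs : size (exec ws gs) = size ws + size gs.
Proof. by elim: gs ws => [|g gs IH] ws; rewrite ?addn0 // exec_cons IH size_rcons addSnnS. Qed.

Lemma prefix_exec ws gs : prefix ws (exec ws gs).
Proof.
elim: gs ws => [|g gs IH] ws; first exact: prefix_refl.
exact: prefix_trans (prefix_rcons ws _) (IH _).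
Qed.

Lemma nth_prefix (T : eqType) (x0 : T) s1 s2 i :
  prefix s1 s2 -> i < size s1 -> nth x0 s2 i = nth x0 s1 i.
Proof. by move=> /prefixP[s ->] lt_i; rewrite nth_cat lt_i. Qed.

Lemma nth_exec ws gs i : i < size ws -> nth false (exec ws gs) i = nth false ws i.
Proof. exact/nth_prefix/prefix_exec. Qed.

Lemma size_step ws g : size (step ws g) = (size ws).+1.
Proof. exact: size_rcons. Qed.

Lemma prefix_step s ws g : prefix s ws -> prefix s (step ws g).
Proof. by move/prefix_trans; apply; apply: prefix_rcons. Qed.

Lemma last_step ws g : last false (step ws g) = eval_gate ws g.
Proof. by rewrite last_rcons. Qed.

Section Gadgets.
Variable x : seq bool.

(* A monomial is the list of the variables it multiplies; a polynomial over
   F_2 is the list of its monomials. *)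
Definition eval_f2poly (p : seq (seq nat)) : bool :=
  odd (count (fun mo => all (nth false x) mo) p).

Definition vars_below (n : nat) (p : seq (seq nat)) : bool := all (all (fun v => v < n)) p.

Lemma eval_f2poly_cons mo p :
  eval_f2poly (mo :: p) = all (nth false x) mo (+) eval_f2poly p.
Proof. by rewrite /eval_f2poly /= oddD oddb. Qed.

Lemma eval_f2poly_cat p1 p2 : eval_f2poly (p1 ++ p2) = eval_f2poly p1 (+) eval_f2poly p2.
Proof. by rewrite /eval_f2poly count_cat oddD. Qed.

Fixpoint and_gates (c : nat) (mo : seq nat) : seq gate :=
  if mo is v :: mo' then GAnd c v :: and_gates c.+1 mo' else [::].

(* Wire [c] does not exist yet when [GNot c] is evaluated, so it reads [true]. *)
Definition monomial_gates (c : nat) (mo : seq nat) : seq gate := GNot c :: and_gates c mo.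

Definition xor_gates (a b c : nat) : seq gate :=
  [:: GOr a b; GAnd a b; GNot c.+1; GAnd c c.+2].

(* The last wire holds the XOR of the monomials computed so far; [poly_gates]
   initialises it to [false] by reading the nonexistent wire [c]. *)
Fixpoint xor_monomials_gates (c : nat) (p : seq (seq nat)) : seq gate :=
  if p is mo :: p' then
    let c' := c + (size mo).+1 in
    monomial_gates c mo ++ xor_gates c.-1 c'.-1 c' ++ xor_monomials_gates (c' + 4) p'
  else [::].

Lemma xor_monomials_gates_cons c mo p :
  xor_monomials_gates c (mo :: p) =
  monomial_gates c mo ++ xor_gates c.-1 (c + (size mo).+1).-1 (c + (size mo).+1) ++
  xor_monomials_gates (c + (size mo).+1 + 4) p.
Proof. by []. Qed.

Definition poly_gates (c : nat) (p : seq (seq nat)) : seq gate :=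
  GAnd c c :: xor_monomials_gates c.+1 p.

Definition poly_cost (p : seq (seq nat)) : nat := (sumn [seq size mo + 5 | mo <- p]).+1.

Lemma size_and_gates c mo : size (and_gates c mo) = size mo.
Proof. by elim: mo c => //= v mo IH c; rewrite IH. Qed.

Lemma size_poly_gates c p : size (poly_gates c p) = poly_cost p.
Proof.
rewrite /= /poly_cost; congr _.+1; elim: p c.+1 => //= mo p IH c'.
by rewrite !size_cat /= size_and_gates IH; lia.
Qed.

Lemma last_and_gates ws c mo : prefix x ws -> size ws = c.+1 ->
  all (fun v => v < size x) mo ->
  last false (exec ws (and_gates c mo)) = last false ws && all (nth false x) mo.
Proof.
elim: mo ws c => [|v mo IH] ws c x_ws size_ws /=; first by rewrite andbT.
case/andP=> v_lt mo_lt; rewrite exec_cons IH ?prefix_step ?size_step ?size_ws //.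
have -> : c = (size ws).-1 by rewrite size_ws.
by rewrite last_step /= nth_last (nth_prefix _ x_ws) // andbA.
Qed.

Lemma last_monomial_gates ws c mo : prefix x ws -> size ws = c ->
  all (fun v => v < size x) mo ->
  last false (exec ws (monomial_gates c mo)) = all (nth false x) mo.
Proof.
move=> x_ws size_ws mo_lt; rewrite /monomial_gates exec_cons.
rewrite last_and_gates ?prefix_step ?size_step ?size_ws //.
by rewrite last_step /= nth_default ?size_ws.
Qed.

Lemma last_xor_gates ws a b c : size ws = c -> a < c -> b < c ->
  last false (exec ws (xor_gates a b c)) = nth false ws a (+) nth false ws b.
Proof.
move=> <- lt_a lt_b; rewrite /xor_gates !exec_cons /exec /= last_step /step /=.
rewrite !nth_rcons !size_rcons !ltnS ltnn !eqxx leqnSn leqnn /= lt_a lt_b.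
by case: (nth false ws a); case: (nth false ws b).
Qed.

Lemma last_xor_monomials_gates ws c p : prefix x ws -> size ws = c -> 0 < c ->
  vars_below (size x) p ->
  last false (exec ws (xor_monomials_gates c p)) = last false ws (+) eval_f2poly p.
Proof.
elim: p ws c => [|mo p IH] ws c x_ws size_ws c_gt0; first by rewrite /eval_f2poly addbF.
case/andP=> mo_lt p_lt; rewrite xor_monomials_gates_cons eval_f2poly_cons !exec_cat.
set c' := c + (size mo).+1; set ws1 := exec ws (monomial_gates c mo).
have size_ws1 : size ws1 = c' by rewrite size_exec /monomial_gates /= size_and_gates size_ws.
have x_ws1 : prefix x ws1 := prefix_trans x_ws (prefix_exec _ _).
have c'_gt0 : 0 < c' by rewrite /c' addnS.
rewrite IH ?addn4 //; last 2 first.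
- exact: prefix_trans x_ws1 (prefix_exec _ _).
- by rewrite size_exec size_ws1 addn4.
rewrite last_xor_gates //; try by rewrite /c'; lia.
rewrite -size_ws1 nth_last (last_monomial_gates x_ws size_ws mo_lt).
by rewrite nth_exec -size_ws ?nth_last ?addbA // prednK ?size_ws.
Qed.

Lemma last_poly_gates ws c p : prefix x ws -> size ws = c -> vars_below (size x) p ->
  last false (exec ws (poly_gates c p)) = eval_f2poly p.
Proof.
move=> x_ws size_ws p_lt; rewrite /poly_gates exec_cons.
rewrite (last_xor_monomials_gates (prefix_step _ x_ws)) ?size_step ?size_ws //.
by rewrite last_step /= nth_default ?size_ws.
Qed.

End Gadgets.

Fixpoint polys_gates (c : nat) (ps : seq (seq (seq nat))) : seq gate :=
  if ps is p :: ps' then poly_gates c p ++ polys_gates (c + poly_cost p) ps' else [::].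

Fixpoint polys_outs (c : nat) (ps : seq (seq (seq nat))) : seq nat :=
  if ps is p :: ps' then (c + poly_cost p).-1 :: polys_outs (c + poly_cost p) ps' else [::].

Definition polys_circuit (n : nat) (ps : seq (seq (seq nat))) : circuit :=
  Circuit (polys_gates n ps) (polys_outs n ps).

Lemma exec_polys_gates x ws c ps : prefix x ws -> size ws = c ->
  all (vars_below (size x)) ps ->
  [seq nth false (exec ws (polys_gates c ps)) o | o <- polys_outs c ps] =
  [seq eval_f2poly x p | p <- ps].
Proof.
elim: ps ws c => // p ps IH ws c x_ws size_ws /andP[p_lt ps_lt].
have size_ws1 : size (exec ws (poly_gates c p)) = c + poly_cost p.
  by rewrite size_exec size_poly_gates size_ws.
rewrite [polys_outs _ _]/= map_cons exec_cat IH //; last exact: prefix_trans x_ws (prefix_exec _ _).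
rewrite nth_exec ?size_ws1 ?prednK ?addn_gt0 ?orbT // -size_ws1 nth_last.
by rewrite (last_poly_gates x_ws size_ws p_lt).
Qed.

Lemma eval_polys_circuit x ps : all (vars_below (size x)) ps ->
  eval_out (polys_circuit (size x) ps) x = [seq eval_f2poly x p | p <- ps].
Proof. exact: exec_polys_gates (prefix_refl x) erefl. Qed.

Lemma csize_polys_circuit n ps : csize (polys_circuit n ps) = sumn [seq poly_cost p | p <- ps].
Proof.
rewrite /csize /=; elim: ps n => // p ps IH n.
by rewrite -[polys_gates _ _]/(poly_gates n p ++ _) size_cat size_poly_gates IH.
Qed.

Definition shift_gate (s : nat) (g : gate) : gate :=
  match g with
  | GAnd i j => GAnd (s + i) (s + j)
  | GOr i j => GOr (s + i) (s + j)
  | GNot i => GNot (s + i)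
  end.

Definition shift_circuit (s : nat) (C : circuit) : circuit :=
  Circuit (map (shift_gate s) (gates C)) (map (addn s) (outs C)).

(* Runs [D] on the input with its first [s] bits ignored. *)
Definition shift_nd (s : nat) (D : ndcircuit) : ndcircuit :=
  NDCircuit (shift_circuit s (ndc D)) (wlen D).

Lemma nth_cat_size (s t : seq bool) i : nth false (s ++ t) (size s + i) = nth false t i.
Proof. by rewrite nth_cat ltnNge leq_addr addKn. Qed.

Lemma exec_shift pre ws gs :
  exec (pre ++ ws) (map (shift_gate (size pre)) gs) = pre ++ exec ws gs.
Proof.
elim: gs ws => [|g gs IH] ws //=; rewrite !exec_cons -IH; congr exec.
by rewrite /step rcons_cat; case: g => [i j|i j|i] /=; rewrite !nth_cat_size.
Qed.

Lemma eval_out_shift pre inp C :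
  eval_out (shift_circuit (size pre) C) (pre ++ inp) = eval_out C inp.
Proof.
rewrite /eval_out !eval_wiresE exec_shift -map_comp.
by apply: eq_map => o /=; rewrite nth_cat_size.
Qed.

Lemma nd_size_shift s D : nd_size (shift_nd s D) = nd_size D.
Proof. by rewrite /nd_size /csize /= size_map. Qed.

Lemma nd_accepts_shift s D (y : seq bool) : s <= size y ->
  nd_accepts (shift_nd s D) y = nd_accepts D (drop s y).
Proof.
move=> le_s; apply: eq_existsb => w.
by rewrite -{1}(cat_take_drop s y) -catA -{1}(size_takel le_s) eval_out_shift.
Qed.

(** * Polynomials over F_2 *)

Lemma odd_card_symdiff (T : finType) (A B : {set T}) :
  odd #|(A :\: B) :|: (B :\: A)| = odd #|A| (+) odd #|B|.
Proof.
rewrite cardsU (_ : _ :&: _ = set0) ?cards0 ?subn0; last first.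
  by apply/setP => i; rewrite !inE; case: (i \in A); case: (i \in B).
by rewrite -(cardsID B A) -(cardsID A B) setIC !oddD; do 3!case: (odd _).
Qed.

Lemma setI_symdiff (T : finType) (A B C : {set T}) :
  ((A :\: B) :|: (B :\: A)) :&: C = (A :&: C :\: B :&: C) :|: (B :&: C :\: A :&: C).
Proof. by apply/setP => i; rewrite !inE; case: (i \in A); case: (i \in B); case: (i \in C). Qed.

Definition monomial_set (n : nat) (mo : seq nat) : {set 'I_n} := [set i : 'I_n | val i \in mo].

Lemma card_monomial_set n mo : #|monomial_set n mo| <= size mo.
Proof.
rewrite cardE -(size_map val); apply: uniq_leq_size.
  by rewrite map_inj_uniq ?enum_uniq //; apply: val_inj.
by move=> v /mapP[i]; rewrite mem_enum inE => mo_i ->.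
Qed.

Lemma all_monomial_set n (x : n.-tuple bool) mo : all (fun v => v < n) mo ->
  all (nth false x) mo = [forall i in monomial_set n mo, tnth x i].
Proof.
move=> mo_lt; apply/allP/forallP => [x_mo i|x_mo v v_mo].
  by apply/implyP; rewrite inE (tnth_nth false) => /x_mo.
have v_lt : v < n by move/allP: mo_lt; apply.
by have := x_mo (Ordinal v_lt); rewrite inE v_mo (tnth_nth false).
Qed.

Lemma f2poly_deg_le_eval n d p : vars_below n p -> all (fun mo => size mo <= d) p ->
  f2poly_deg_le d (fun x : n.-tuple bool => eval_f2poly x p).
Proof.
elim: p => [_ _ | mo p IH /andP[mo_lt p_lt] /andP[mo_d p_d]].
  exists set0; split=> [S|x]; first by rewrite inE.
  by rewrite (_ : [set _ in set0 | _] = set0) ?cards0 //; apply/setP => S; rewrite !inE.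
have [P [P_d P_eval]] := IH p_lt p_d.
set S := monomial_set n mo.
exists ((P :\: [set S]) :|: ([set S] :\: P)); split.
  move=> T; rewrite !inE => /orP[/andP[_ /P_d] | /andP[_ /eqP ->]] //.
  exact: leq_trans (card_monomial_set _ _) mo_d.
move=> x; set sat := [set T : {set 'I_n} | [forall i in T, tnth x i]].
have satE (Q : {set {set 'I_n}}) : [set T in Q | [forall i in T, tnth x i]] = Q :&: sat.
  by apply/setP => T; rewrite !inE.
rewrite satE setI_symdiff odd_card_symdiff -satE -P_eval eval_f2poly_cons addbC.
rewrite (all_monomial_set x mo_lt) -/S; congr (_ (+) _).
have [S_sat|S_unsat] := boolP (S \in sat).
  by rewrite (setIidPl _) ?cards1 ?sub1set //; move: S_sat; rewrite inE.
move: S_unsat; rewrite inE => /negbTE S_unsat.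
rewrite (_ : _ :&: _ = set0) ?cards0 ?S_unsat //.
by apply/setP => T; rewrite !inE; case: eqP => // ->.
Qed.

Lemma F2_add_neq0 (a b : 'F_2) : (a + b != 0)%R = (a != 0%R) (+) (b != 0%R).
Proof. by case: a => [[|[|?]]] ?; case: b => [[|[|?]]] ?. Qed.

Lemma F2_mul_neq0 (a b : 'F_2) : (a * b != 0)%R = (a != 0%R) && (b != 0%R).
Proof. by case: a => [[|[|?]]] ?; case: b => [[|[|?]]] ?. Qed.

Lemma F2_sum_neq0 (I : Type) (s : seq I) (F : I -> 'F_2) :
  (\sum_(i <- s) F i != 0)%R = odd (count (fun i => F i != 0%R) s).
Proof.
elim: s => [|i s IH]; first by rewrite big_nil.
by rewrite big_cons F2_add_neq0 IH /= oddD oddb.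
Qed.

(** * Base-[L] digits *)

Section CeilRoot.
Variable d : nat.

Definition ceil_root (m : nat) : nat := (find (fun L => m <= L.+1 ^ d) (iota 0 m)).+1.

Hypothesis d_gt0 : 0 < d.

Lemma leq_ceil_root m : m <= ceil_root m ^ d.
Proof.
rewrite /ceil_root; have [has_L|] := boolP (has (fun L => m <= L.+1 ^ d) (iota 0 m)).
  have := has_L; rewrite has_find size_iota => lt_find.
  by have := nth_find 0 has_L; rewrite nth_iota ?add0n.
move/hasNfind => ->; rewrite size_iota.
by apply: leq_trans (leqnSn m) _; rewrite -{1}(expn1 m.+1) leq_pexp2l.
Qed.

Lemma ceil_root_pred m : (ceil_root m).-1 ^ d <= m.
Proof.
rewrite /ceil_root /=; have := find_size (fun L => m <= L.+1 ^ d) (iota 0 m).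
case: find (@before_find _ 0 (fun L => m <= L.+1 ^ d) (iota 0 m)) => [|L] before.
  by rewrite exp0n.
rewrite size_iota => lt_L; have := before L (ltnSn L).
rewrite nth_iota ?add0n // => /negbT; rewrite -ltnNge; exact: ltnW.
Qed.

Lemma ceil_root_min m L : 0 < L -> m <= L ^ d -> ceil_root m <= L.
Proof.
move=> L_gt0 le_m; rewrite /ceil_root -(prednK L_gt0) ltnS leqNgt; apply/negP => lt_L.
have := before_find 0 lt_L; rewrite nth_iota ?add0n ?prednK ?le_m //.
rewrite -(prednK L_gt0); apply: leq_trans lt_L _.
by have := find_size (fun L => m <= L.+1 ^ d) (iota 0 m); rewrite size_iota.
Qed.

Lemma ceil_root_monotone m1 m2 : m1 <= m2 -> ceil_root m1 <= ceil_root m2.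
Proof. by move=> le_m; apply: ceil_root_min => //; apply: leq_trans le_m (leq_ceil_root m2). Qed.

End CeilRoot.

Definition digit (L i j : nat) : nat := (j %/ L ^ i) %% L.

Lemma digitS L i j : digit L i.+1 j = digit L i (j %/ L).
Proof. by rewrite /digit expnS divnMA. Qed.

Lemma digit_inj L e a b : 0 < L -> a < L ^ e -> b < L ^ e ->
  (forall i, i < e -> digit L i a = digit L i b) -> a = b.
Proof.
move=> L_gt0; elim: e a b => [|e IH] a b; first by rewrite !ltnS !leqn0 => /eqP-> /eqP->.
rewrite expnS => lt_a lt_b eq_digits.
have eq_div : a %/ L = b %/ L.
  apply: IH; rewrite ?ltn_divLR 1?mulnC // => i lt_i.
  by rewrite -!digitS; apply: eq_digits.
have := eq_digits 0 isT; rewrite /digit expn0 !divn1 => eq_mod.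
by rewrite (divn_eq a L) (divn_eq b L) eq_div eq_mod.
Qed.

(* The digit vectors of [r] and of the entries of [js] coincide in exactly
   one position [t] when [r \in js], and in none otherwise. *)
Lemma odd_count_digits_eq L d k (js : seq nat) r : 0 < L -> 0 < d -> uniq js ->
  size js <= k -> all (fun j => j < L ^ d) js -> r < L ^ d ->
  odd (count (fun t => all (fun i => (t < size js) && (digit L i r == digit L i (nth 0 js t)))
                           (iota 0 d)) (iota 0 k)) = (r \in js).
Proof.
move=> L_gt0 d_gt0 js_uniq js_k js_lt r_lt.
rewrite -(oddb (r \in js)) -(count_uniq_mem _ js_uniq) -[in RHS](mkseq_nth 0 js).
rewrite count_map -(subnKC js_k) iotaD count_cat add0n.
rewrite [X in _ + X](@eq_in_count _ _ pred0) ?count_pred0 ?addn0; last first.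
  move=> t; rewrite mem_iota => /andP[/leq_gtF t_ge _].
  by rewrite -(prednK d_gt0) /= t_ge.
congr (odd _); apply: eq_in_count => t; rewrite mem_iota /= => t_lt.
apply/allP/eqP => [eq_digits | ->]; last by move=> i _; rewrite t_lt eqxx.
apply: (digit_inj L_gt0 _ r_lt); first by apply: (allP js_lt); apply: mem_nth.
move=> i lt_i; have : i \in iota 0 d by rewrite mem_iota.
by move/eq_digits/andP=> [_ /eqP ->].
Qed.

(** * The generator *)

Lemma sumn_map_leq (T : eqType) (s : seq T) (f : T -> nat) b :
  (forall x, x \in s -> f x <= b) -> sumn (map f s) <= size s * b.
Proof.
elim: s => //= x s IH le_f; rewrite mulSn leq_add ?le_f ?mem_head // IH // => y s_y.
by rewrite le_f // inE s_y orbT.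
Qed.

Lemma leq_poly_size_bound n a : 0 < a ->
  (n ^ 2 + 1) * (2 * n * a + 1) <= 6 * a * n ^ (6 * a) + 6 * a.
Proof.
move=> a_gt0; case: n => [|n]; first by rewrite exp0n //= muln0 mul0n; lia.
have le_cube : n.+1 ^ 3 <= n.+1 ^ (6 * a) by rewrite leq_pexp2l //; lia.
apply: leq_trans (leq_addr _ _); apply: leq_trans (_ : 6 * a * n.+1 ^ 3 <= _); last first.
  by rewrite leq_mul2l le_cube orbT.
by rewrite !expnS expn0 !muln1; nia.
Qed.

Section Generator.
Variables (eps : R) (A : forall k, 'M['F_2]_(rpow_len (Rplus R1 eps) k, k)) (q d : nat).

Local Notation lpn_len k := (rpow_len (Rplus R1 eps) k).
Local Notation out_len n := (rpow_len (Rplus R1 (Rinv (INR q))) n).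

(* A seed of length [input_len k] is a secret of [k] bits followed by [k * d]
   blocks of [side_len k] bits; [block_index k t i v] is entry [v] of the
   block holding the one-hot encoding of digit [i] of error position [t]. *)
Definition side_len (k : nat) : nat := ceil_root d (lpn_len k).

Definition input_len (k : nat) : nat := k * (1 + d * side_len k).

Definition block_index (k t i v : nat) : nat := k + (t * d + i) * side_len k + v.

Definition lin_poly (k row : nat) : seq (seq nat) :=
  if insub row is Some r then [seq [:: val l] | l <- enum 'I_k & A k r l != 0%R] else [::].

Definition tensor_poly (k row : nat) : seq (seq nat) :=
  [seq [seq block_index k t i (digit (side_len k) i row) | i <- iota 0 d] | t <- iota 0 k].

Definition input_len_inv (n : nat) : nat := find (fun k => input_len k == n) (iota 0 n.+1).

(* Output bit [j] is the row [lpn_len k - out_len n + j] of [A s + e]; on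
   lengths [n] that are not of the form [input_len k] the output is zero. *)
Definition gen_poly (n j : nat) : seq (seq nat) :=
  let k := input_len_inv n in
  if k <= n then
    let row := lpn_len k - out_len n + j in lin_poly k row ++ tensor_poly k row
  else [::].

Definition gen (n : nat) (x : n.-tuple bool) : (out_len n).-tuple bool :=
  [tuple eval_f2poly x (gen_poly n j) | j < out_len n].

Hypothesis d_gt0 : 0 < d.
Hypothesis eps_gt0 : Rlt R0 eps.

Lemma side_len_gt0 k : 0 < side_len k.
Proof. by []. Qed.

Lemma leq_input_len k : k <= input_len k.
Proof. by rewrite /input_len -{1}(muln1 k) leq_mul2l leq_addr orbT. Qed.

Lemma input_len_ltS k : input_len k < input_len k.+1.
Proof.
case: k => [|k]; first by rewrite /input_len mul0n mul1n add1n.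
have le_side : side_len k.+1 <= side_len k.+2.
  by apply: (ceil_root_monotone d_gt0); apply: rpow_len_monotone; [lra | rewrite /= leqnSn].
rewrite /input_len; apply: (@leq_trans (k.+2 * (1 + d * side_len k.+1))).
  by rewrite ltn_pmul2r ?add1n.
by rewrite leq_mul2l leq_add2l leq_mul2l le_side !orbT.
Qed.

Lemma input_len_inj : injective input_len.
Proof.
have mono := homo_ltn ltn_trans input_len_ltS.
by move=> i j eq_ij; case: (ltngtP i j) => // /mono; rewrite eq_ij ltnn.
Qed.

Lemma input_len_invK k : input_len_inv (input_len k) = k.
Proof.
have has_k : has (fun k' => input_len k' == input_len k) (iota 0 (input_len k).+1).
  by apply/hasP; exists k; rewrite // mem_iota ltnS leq_input_len.
have := has_k; rewrite has_find size_iota => lt_find.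
by have /eqP/input_len_inj := nth_find 0 has_k; rewrite nth_iota.
Qed.

Lemma input_len_invP n : input_len_inv n <= n -> input_len (input_len_inv n) = n.
Proof.
move=> le_k; have has_n : has (fun k => input_len k == n) (iota 0 n.+1).
  by rewrite has_find size_iota.
by have /eqP := nth_find 0 has_n; rewrite nth_iota.
Qed.

Lemma block_index_lt k t i v : t < k -> i < d -> v < side_len k ->
  block_index k t i v < input_len k.
Proof.
move=> lt_t lt_i lt_v; rewrite /block_index /input_len mulnDr muln1 -addnA ltn_add2l.
apply: leq_trans (_ : (t * d + i).+1 * side_len k <= _); first by rewrite mulSn addnC ltn_add2r.
by rewrite mulnA leq_mul2r; apply/orP; right; nia.
Qed.

Lemma size_lin_poly k row : size (lin_poly k row) <= k.
Proof.
rewrite /lin_poly; case: insub => [r|] //.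
by rewrite size_map size_filter (leq_trans (count_size _ _)) ?size_enum_ord.
Qed.

Lemma gen_poly_vars n j : vars_below n (gen_poly n j).
Proof.
rewrite /gen_poly; case: ifP => // le_k; rewrite -[in vars_below n](input_len_invP le_k).
set k := input_len_inv n; rewrite /vars_below all_cat; apply/andP; split.
  rewrite /lin_poly; case: insub => [r|] //.
  by apply/allP => _ /mapP[l _ ->] /=; rewrite (leq_trans (ltn_ord l)) ?leq_input_len.
apply/allP => _ /mapP[t t_k ->]; apply/allP => _ /mapP[i i_d ->].
move: t_k i_d; rewrite !mem_iota /= => lt_t lt_i.
by rewrite block_index_lt // /digit ltn_mod side_len_gt0.
Qed.

Lemma gen_poly_deg n j : all (fun mo => size mo <= d) (gen_poly n j).
Proof.
rewrite /gen_poly; case: ifP => // _; rewrite all_cat; apply/andP; split.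
  by rewrite /lin_poly; case: insub => [r|] //; apply/allP => _ /mapP[l _ ->].
by apply/allP => _ /mapP[t _ ->]; rewrite size_map size_iota.
Qed.

Lemma size_gen_poly n j : size (gen_poly n j) <= 2 * n.
Proof.
rewrite /gen_poly; case: ifP => // le_k; rewrite size_cat mul2n -addnn.
by rewrite leq_add // ?size_map ?size_iota // (leq_trans (size_lin_poly _ _)).
Qed.

Lemma val_gen n (x : n.-tuple bool) :
  val (gen x) = [seq eval_f2poly x (gen_poly n j) | j <- iota 0 (out_len n)].
Proof. by rewrite /= -val_enum_ord -map_comp. Qed.

Definition seed (k : nat) (sb : seq bool) (js : seq nat) : seq bool :=
  mkseq (fun b => if b < k then nth false sb b else
    let blk := (b - k) %/ side_len k in
    (blk %/ d < size js) &&
    ((b - k) %% side_len k == digit (side_len k) (blk %% d) (nth 0 js (blk %/ d))))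
    (input_len k).

Lemma nth_seed_secret k sb js l : l < k -> nth false (seed k sb js) l = nth false sb l.
Proof. by move=> lt_l; rewrite nth_mkseq ?lt_l // (leq_trans lt_l) ?leq_input_len. Qed.

Lemma nth_seed_block k sb js t i v : t < k -> i < d -> v < side_len k ->
  nth false (seed k sb js) (block_index k t i v) =
  (t < size js) && (v == digit (side_len k) i (nth 0 js t)).
Proof.
move=> lt_t lt_i lt_v; rewrite nth_mkseq ?block_index_lt //.
rewrite /block_index -addnA ltnNge leq_addr /= addKn divnMDl // (divn_small lt_v) addn0.
by rewrite modnMDl (modn_small lt_v) divnMDl // (divn_small lt_i) addn0 modnMDl (modn_small lt_i).
Qed.

Lemma eval_lin_poly x k (r : 'I_(lpn_len k)) :
  eval_f2poly x (lin_poly k r) =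
  odd (count (fun l : 'I_k => (A k r l != 0%R) && nth false x l) (enum 'I_k)).
Proof.
rewrite /lin_poly valK /eval_f2poly count_map count_filter.
by congr odd; apply: eq_count => l /=; rewrite andbT andbC.
Qed.

Lemma eval_tensor_poly x k row (js : seq nat) : uniq js -> size js <= k ->
  all (fun j => j < side_len k ^ d) js -> row < side_len k ^ d ->
  (forall t i v, t < k -> i < d -> v < side_len k ->
     nth false x (block_index k t i v) =
     (t < size js) && (v == digit (side_len k) i (nth 0 js t))) ->
  eval_f2poly x (tensor_poly k row) = (row \in js).
Proof.
move=> js_uniq js_k js_lt lt_row x_blocks.
rewrite -(odd_count_digits_eq (side_len_gt0 k) d_gt0 js_uniq js_k js_lt lt_row).
rewrite /eval_f2poly count_map; congr odd.
apply: eq_in_count => t; rewrite mem_iota /= => lt_t.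
rewrite all_map; apply: eq_in_all => i; rewrite mem_iota /= => lt_i.
by rewrite x_blocks // /digit ltn_mod side_len_gt0.
Qed.

Lemma gen_covers_lpn k (s : 'cV['F_2]_k) (e : 'cV['F_2]_(lpn_len k)) :
  out_len (input_len k) <= lpn_len k -> hweight e <= k ->
  exists x : (input_len k).-tuple bool,
    val (gen x) = drop (lpn_len k - out_len (input_len k)) (bits_of_cV (A k *m s + e)%R).
Proof.
move=> le_out wt_e; set L := side_len k.
set js := [seq val i | i <- enum [set i | e i ord0 != 0%R]].
have js_uniq : uniq js by rewrite map_inj_uniq ?enum_uniq //; apply: val_inj.
have js_k : size js <= k by rewrite size_map -cardE.
have js_lt : all (fun j => j < L ^ d) js.
  by apply/allP => _ /mapP[i _ ->]; apply: leq_trans (ltn_ord i) (leq_ceil_root d_gt0 _).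
set sb := [seq s l ord0 != 0%R | l <- enum 'I_k].
have size_seed : size (seed k sb js) == input_len k by rewrite size_mkseq.
exists (Tuple size_seed); apply: (@eq_from_nth _ false).
  by rewrite val_gen size_map size_iota size_drop size_tuple subKn.
move=> j; rewrite val_gen size_map size_iota => lt_j.
have lt_row : lpn_len k - out_len (input_len k) + j < lpn_len k by lia.
rewrite (nth_map 0) ?size_iota // nth_iota // add0n nth_drop /bits_of_cV.
rewrite /gen_poly input_len_invK leq_input_len -[_ - _ + j]/(val (Ordinal lt_row)).
rewrite nth_mktuple eval_f2poly_cat eval_lin_poly.
rewrite (eval_tensor_poly js_uniq js_k js_lt) ?(leq_trans lt_row) ?leq_ceil_root //; last first.
  by move=> t i v lt_t lt_i lt_v; rewrite nth_seed_block.
rewrite !mxE F2_add_neq0 F2_sum_neq0 enumT; congr (_ (+) _).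
  congr odd; apply: eq_count => l; rewrite F2_mul_neq0 /= nth_seed_secret //.
  by rewrite (nth_map l) ?size_enum_ord // nth_ord_enum.
by rewrite mem_map ?mem_enum ?inE //; apply: val_inj.
Qed.

Lemma gen_f2poly_deg n (i : 'I_(out_len n)) :
  f2poly_deg_le d (fun x : n.-tuple bool => tnth (gen x) i).
Proof.
have [P [P_d P_eval]] := f2poly_deg_le_eval (gen_poly_vars n i) (gen_poly_deg n i).
by exists P; split=> // x; rewrite -P_eval tnth_mktuple.
Qed.

Lemma gen_computable : (0 < q)%N -> poly_circuit_computable gen.
Proof.
move=> q_gt0; exists (6 * (d + 5)).
exists (fun n => polys_circuit n [seq gen_poly n j | j <- iota 0 (out_len n)]) => n; split.
  rewrite csize_polys_circuit -map_comp.
  apply: leq_trans (leq_poly_size_bound n (ltn_addl d (isT : 0 < 5))).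
  apply: leq_trans (_ : out_len n * (2 * n * (d + 5) + 1) <= _); last first.
    by rewrite leq_mul2r rpow_len_leq_sqS ?orbT.
  apply: leq_trans (sumn_map_leq (b := 2 * n * (d + 5) + 1) _) _; last by rewrite size_iota.
  move=> j _; rewrite /= /poly_cost addn1 ltnS.
  apply: leq_trans (sumn_map_leq _) (_ : size (gen_poly n j) * (d + 5) <= _).
    by move=> mo mo_in; rewrite leq_add2r; apply: (allP (gen_poly_deg n j)).
  by rewrite leq_mul2r size_gen_poly orbT.
move=> x; rewrite val_gen.
have := @eval_polys_circuit x [seq gen_poly n j | j <- iota 0 (out_len n)].
rewrite size_tuple -map_comp => -> //.
by apply/allP => _ /mapP[j _ ->]; apply: gen_poly_vars.
Qed.

End Generator.

(** * Security *)

Lemma card_drop_preimage (m s N : nat) (P : pred (seq bool)) : m = s + N ->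
  2 ^ s * #|[set z : N.-tuple bool | P z]| <= #|[set y : m.-tuple bool | P (drop s y)]|.
Proof.
move=> ->; set Z := [set z : N.-tuple bool | P z].
have -> : 2 ^ s * #|Z| = #|setX [set: s.-tuple bool] Z|.
  by rewrite cardsX cardsT card_tuple card_bool.
pose cat_pair (u : s.-tuple bool * N.-tuple bool) := cat_tuple u.1 u.2.
have cat_pair_inj : injective cat_pair.
  move=> [a1 b1] [a2 b2] /(congr1 val) /= eq_cat.
  have := congr1 (take s) eq_cat; have := congr1 (drop s) eq_cat.
  rewrite !take_size_cat ?drop_size_cat ?size_tuple // => /val_inj-> /val_inj->.
  by [].
rewrite -(card_imset _ cat_pair_inj); apply/subset_leq_card/subsetP => _ /imsetP[[a b] + ->].
by rewrite in_setX !inE /= drop_size_cat ?size_tuple.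
Qed.

Lemma nd_breaks_suffix (N M f : nat -> nat) (a : nat)
    (Bad : forall n, (N n).-tuple bool -> Prop) (Bad' : forall k, (M k).-tuple bool -> Prop) :
  (forall k, k <= f k) ->
  (exists k0, forall k, k0 <= k -> [/\ f k <= k ^ a, N (f k) <= M k &
     forall y, Bad' k y -> exists2 z, Bad (f k) z & val z = drop (M k - N (f k)) y]) ->
  nd_breaks Bad -> nd_breaks Bad'.
Proof.
move=> f_ge [k0 embed] [c [delta [D [delta_gt0 [n0 breaks]]]]].
exists (a.+1 * c), delta, (fun k => shift_nd (M k - N (f k)) (D (f k))); split=> //.
exists (maxn (maxn k0 n0) 1) => k; rewrite !geq_max => /andP[/andP[k0_k n0_k] k_gt0].
have [fk_le le_NM embed_k] := embed k k0_k.
have [size_D [count_D reject_D]] := breaks (f k) (leq_trans n0_k (f_ge k)).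
set s := M k - N (f k); have M_split : M k = s + N (f k) by rewrite subnK.
have le_s (y : (M k).-tuple bool) : s <= size y by rewrite size_tuple leq_subr.
split; [|split].
- rewrite nd_size_shift; apply: leq_trans size_D _; apply: leq_add; last by rewrite leq_pmull.
  apply: leq_mul; first by rewrite leq_pmull.
  apply: leq_trans (_ : k ^ (a * c) <= _); last by rewrite leq_pexp2l // leq_mul2r leqnSn orbT.
  by rewrite expnM; case: (c) => [|c']; rewrite ?expn0 // leq_exp2r.
- pose A := [set y : (M k).-tuple bool | nd_accepts (D (f k)) (drop s y)].
  rewrite (eq_card (B := A)) => [|y]; last by rewrite !inE nd_accepts_shift.
  apply: Rle_trans (le_INR _ _ (leP (card_drop_preimage _ M_split))).
  rewrite mult_INR INR_expn {1}M_split pow_add Rmult_comm Rmult_assoc.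
  apply: Rmult_le_compat_l; first exact/pow_le/pos_INR.
  by rewrite Rmult_comm.
- move=> y /embed_k[z bad_z z_y]; rewrite nd_accepts_shift // -z_y; exact: reject_D.
Qed.

(* With [d = B (q + 1)] and [lpn_len k <= k ^ B], the side length is about
   [k ^ (1 / (q + 1))], so [input_len k] is about [k ^ (1 + 1 / (q + 1))]. *)
Lemma input_len_pow_leq eps (B q k : nat) : 0 < B -> 0 < k ->
  rpow_len (Rplus R1 eps) k <= k ^ B -> (2 * (B * q.+1) + 1) ^ q.+1 <= k ->
  input_len eps (B * q.+1) k ^ q.+1 <= k ^ (q + 4).
Proof.
move=> B_gt0 k_gt0 lpn_le k_large; set d := B * q.+1; set L := side_len eps d k.
have d_gt0 : 0 < d by rewrite muln_gt0 B_gt0.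
have factor_le : 1 + d * L <= (2 * d + 1) * maxn 1 L.-1.
  by case: L (side_len_gt0 eps d k) => [|[|l]] // _; rewrite ?maxn0 ?(maxn_idPr _) //; nia.
have L_le : maxn 1 L.-1 ^ q.+1 <= k.
  have : (L.-1 ^ q.+1) ^ B <= k ^ B.
    by rewrite -expnM mulnC; apply: leq_trans (ceil_root_pred d_gt0 _) lpn_le.
  by rewrite leq_exp2r // /maxn; case: ifP => _ // _; rewrite exp1n.
rewrite /input_len -/L (_ : q + 4 = q.+1 + 3) ?expnD; last by lia.
rewrite expnMn leq_mul2l; apply/orP; right.
apply: leq_trans (_ : ((2 * d + 1) * maxn 1 L.-1) ^ q.+1 <= _); first by rewrite leq_exp2r.
rewrite expnMn (_ : k ^ 3 = k * k * k); last by rewrite !expnS expn0 muln1 mulnA.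
by rewrite -mulnA leq_mul // (leq_trans L_le) // leq_pmulr.
Qed.

Lemma gen_secure eps (A : forall k, 'M['F_2]_(rpow_len (Rplus R1 eps) k, k)) (q B : nat) :
  Rlt R0 eps -> Rle 4 (Rmult (INR q) eps) -> Rle (Rplus R1 eps) (INR B) ->
  ~ nd_breaks (lpn_strings A) ->
  ~ nd_breaks (fun n y => exists x : n.-tuple bool, y = gen A q (B * q.+1) x).
Proof.
move=> eps_gt0 q_eps B_eps lpn_hard gen_broken; apply: lpn_hard.
have B_gt0 : 0 < B by apply/ltP/INR_lt; rewrite /=; lra.
set d := B * q.+1; have d_gt0 : 0 < d by rewrite muln_gt0 B_gt0.
apply: (nd_breaks_suffix (f := input_len eps d) (a := 4) _ _ gen_broken) => [k|].
  exact: leq_input_len.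
exists (maxn ((2 * d + 1) ^ q.+1) 1) => k; rewrite geq_max => /andP[k_large k_gt0].
have pow_le := input_len_pow_leq B_gt0 k_gt0 (rpow_len_leq_expn k_gt0 B_eps) k_large.
have n_gt0 : 0 < input_len eps d k := leq_trans k_gt0 (leq_input_len _ _ _).
have out_le := leq_rpow_len_of_expn n_gt0 k_gt0 q_eps pow_le.
split=> //.
  rewrite -(leq_exp2r _ _ (ltn0Sn q)) -expnM; apply: leq_trans pow_le _.
  by rewrite leq_pexp2l //; lia.
move=> _ [s [e [wt_e ->]]].
have wt_e_le := leq_Rpower_opp_mul_rpow_len k_gt0 wt_e.
have [x gen_x] := gen_covers_lpn A d_gt0 eps_gt0 s out_le wt_e_le.
by exists (gen A q d x); first exists x.
Qed.

Theorem factB3 :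
  forall (eps : R) (A : forall n : nat, 'M['F_2]_(rpow_len (Rplus R1 eps) n, n)),
    Rlt R0 eps ->
    ~ nd_breaks (lpn_strings A) ->
    exists (eps' : R) (d : nat)
           (g : forall n : nat, n.-tuple bool -> (rpow_len (Rplus R1 eps') n).-tuple bool),
      Rlt R0 eps' /\ (2 <= d)%N /\
      demibits_generator_NPpoly g /\
      (forall (n : nat) (i : 'I_(rpow_len (Rplus R1 eps') n)),
          f2poly_deg_le d (fun x => tnth (g n x) i)).
Proof.
move=> eps A eps_gt0 lpn_hard.
have [q q_eps] := INR_archimed eps 4 eps_gt0.
have [B B_eps] := INR_unbounded (Rplus R1 eps).
have q_gt0 : 0 < q by case: q q_eps => //=; lra.
have B_gt0 : 0 < B by apply/ltP/INR_lt; rewrite /=; lra.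
have d_gt0 : 0 < B * q.+1 by rewrite muln_gt0 B_gt0.
exists (Rinv (INR q)), (B * q.+1), (gen A q (B * q.+1)).
split; first exact/Rinv_0_lt_compat/INR_gt0.
split; first by apply: leq_trans (leq_pmull _ B_gt0); rewrite ltnS.
split; last exact: gen_f2poly_deg.
split; first by exists (2 ^ q) => n; apply: ltn_rpow_len.
split; first exact: gen_computable.
by apply: gen_secure => //; lra.
Qed.
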